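(* Let $P$ be a poset on $[n]$ whose labeling is natural, and let $x_1,\dots,x_n$ be strictly positive reals. The continuous time Markov chain given by the uniform promotion graph of $P$ has the uniform stationary distribution; that is, with $M$ its transition matrix, $\sum_{\pi\in\mathcal{L}(P)}M(\pi',\pi)=0$ for every $\pi'\in\mathcal{L}(P)$.
   Context: Linear extensions: $\mathcal{L}(P)=\{\pi\in S_n : i\prec j \text{ in } P \Rightarrow \pi^{-1}_i<\pi^{-1}_j\}$, in one-line notation $\pi=\pi_1\cdots\pi_n$. For $1\le i<n$, $\pi\tau_i$ swaps $\pi_i,\pi_{i+1}$ if they are incomparable in $P$ and is $\pi$ otherwise; operators act on the right, $\pi(\sigma\tau)=(\pi\sigma)\tau$. Extended promotion: $\partial_j=\tau_j\tau_{j+1}\cdots\tau_{n-1}$, $1\le j\le n$. Uniform promotion graph: vertex set $\mathcal{L}(P)$, and for each $\pi$ and $j\in[n]$ a directed edge $\pi\to\pi\partial_j$ of weight $x_j$. Transition matrix $M$: for $\pi'\ne\pi$, $M(\pi',\pi)$ is the sum of weights of edges $\pi\to\pi'$; $M(\pi,\pi)$ is minus the sum of weights of edges $\pi\to\pi'$ with $\pi'\ne\pi$. *)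

From mathcomp Require Import all_boot all_order all_fingroup all_algebra.
Set Implicit Arguments. Unset Strict Implicit. Unset Printing Implicit Defensive.
Import GRing.Theory Num.Theory.

(* A poset on [n] = {0,...,n-1} (0-based labels), given by its (reflexive)
   order relation [le]. *)
Definition is_poset (n : nat) (le : rel 'I_n) : Prop :=
  [/\ reflexive le, antisymmetric le & transitive le].

Definition natural_labeling (n : nat) (le : rel 'I_n) : Prop :=
  forall i j : 'I_n, le i j -> (i <= j)%N.

Definition ltP (n : nat) (le : rel 'I_n) (i j : 'I_n) : bool := le i j && (i != j).
Definition incomp (n : nat) (le : rel 'I_n) (i j : 'I_n) : bool :=
  ~~ le i j && ~~ le j i.

(* A permutation pi of 'I_n is read in one-line notation pi_0 pi_1 ... pi_{n-1}
   with pi_k = pi k (position k holds the label pi k). *)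
Definition linext (n : nat) (le : rel 'I_n) : {set {perm 'I_n}} :=
  [set pi : {perm 'I_n} | [forall i, forall j,
     ltP le i j ==> ((pi^-1)%g i < (pi^-1)%g j)%N]].

Definition tau (n : nat) (le : rel 'I_n) (pi : {perm 'I_n}) (k : nat)
  : {perm 'I_n} :=
  match (insub k : option 'I_n), (insub k.+1 : option 'I_n) with
  | Some a, Some b =>
      if incomp le (pi a) (pi b) then (tperm a b * pi)%g else pi
  | _, _ => pi
  end.

(* Extended promotion pi partial_j = pi tau_j tau_{j+1} ... tau_{n-2}
   (0-based; paper's partial_{j+1}), operators acting on the right. *)
Definition promo (n : nat) (le : rel 'I_n) (pi : {perm 'I_n}) (j : 'I_n)
  : {perm 'I_n} :=
  foldl (tau le) pi (iota j (n.-1 - j)).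

Definition transM (R : pzRingType) (n : nat) (le : rel 'I_n) (x : 'I_n -> R)
  (pi' pi : {perm 'I_n}) : R :=
  if pi' != pi then (\sum_(j : 'I_n | promo le pi j == pi') x j)%R
  else (- \sum_(j : 'I_n | promo le pi j != pi) x j)%R.

(* Each extended promotion operator is a composition of the involutions
   [tau k], and each [tau k] maps linear extensions to linear extensions, so
   every [promo _ j] permutes the finite set of linear extensions.  Hence, for
   each weight [x j], the edges labelled [j] entering a vertex [pi'] from
   other vertices are as many (zero or one) as those leaving it, and the
   column sum of the transition matrix vanishes term by term. *)
From Pilot Require Import Defs.
From mathcomp Require Import all_boot all_order all_fingroup all_algebra.
From mathcomp Require Import zify.
Import GRing.Theory Num.Theory.
Local Open Scope ring_scope.

Lemma sum_preimage_nonfixed (T : finType) (V : nmodType) (S : {set T})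
    (f : T -> T) (c : V) (t : T) :
  injective f -> {subset S <= f @^-1: S} -> t \in S ->
  \sum_(s in S | s != t) (if f s == t then c else 0)
    = if f t != t then c else 0.
Proof.
move=> f_inj fS tS.
have /imsetP [s0 s0S ->] : t \in f @: S.
  suff -> : f @: S = S by [].
  apply/eqP; rewrite eqEcard card_imset // leqnn andbT.
  by apply/subsetP => _ /imsetP [s sS ->]; have := fS s sS; rewrite inE.
rewrite -big_mkcondr /= (inj_eq f_inj).
have [s0_fix | s0_nfix] := eqVneq (f s0) s0.
  rewrite big_pred0 // => s; apply/negbTE.
  by apply/andP => -[/andP [_ /eqP ne] /eqP/f_inj eq]; apply: ne; rewrite eq s0_fix.
rewrite (big_pred1 s0) // => s /=.
apply/andP/eqP => [[_ /eqP/f_inj //] | ->].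
by rewrite s0S eq_sym s0_nfix.
Qed.

Lemma incompC (n : nat) (le : rel 'I_n) : symmetric (incomp le).
Proof. by move=> i j; rewrite /incomp andbC. Qed.

Lemma tauK (n : nat) (le : rel 'I_n) k : involutive (tau le ^~ k).
Proof.
move=> pi; rewrite /tau.
case: (insub k) => [a|] //; case: (insub k.+1) => [b|] //.
have [Hinc | Hinc] := boolP (incomp le (pi a) (pi b)); last by rewrite (negbTE Hinc).
by rewrite !permM tpermL tpermR incompC Hinc tpermKg.
Qed.

Lemma tperm_adjacent_lt (n : nat) (a b p q : 'I_n) :
  val b = (val a).+1 -> (p < q)%N -> ~~ ((p == a) && (q == b)) ->
  (tperm a b p < tperm a b q)%N.
Proof.
have val_neq (u v : 'I_n) : u <> v -> val u <> val v by move=> + /val_inj.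
rewrite -!(inj_eq val_inj) /= => eb.
by case: tpermP => [->|->|/val_neq pa /val_neq pb];
  case: tpermP => [->|->|/val_neq qa /val_neq qb]; lia.
Qed.

Lemma tau_linext (n : nat) (le : rel 'I_n) k pi :
  pi \in linext le -> tau le pi k \in linext le.
Proof.
rewrite /tau; case: insubP => [a _ ea|] //; case: insubP => [b _ eb|] //.
case: ifP => // Hinc; rewrite !inE => /forallP L.
apply/forallP => i; apply/forallP => j; apply/implyP => lij.
rewrite invMg tpermV !permM; apply: tperm_adjacent_lt.
- by rewrite ea eb.
- exact: implyP (forallP (L i) j) lij.
apply/andP => -[/eqP ia /eqP jb]; move: Hinc lij.
by rewrite -ia -jb !permKV /incomp /Defs.ltP => /andP [/negbTE ->].
Qed.

Lemma foldl_tau_inj (n : nat) (le : rel 'I_n) s :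
  injective (fun pi => foldl (tau le) pi s).
Proof.
elim: s => [|k s IH] pi1 pi2 //= /IH E.
by rewrite -[pi1](tauK _ le k) -[pi2](tauK _ le k) /= E.
Qed.

Lemma foldl_tau_linext (n : nat) (le : rel 'I_n) s pi :
  pi \in linext le -> foldl (tau le) pi s \in linext le.
Proof. by elim: s pi => [|k s IH] pi //= /(tau_linext _ _ k); apply: IH. Qed.

Theorem theorem4p3 (R : realFieldType) (n : nat) (le : rel 'I_n)
  (x : 'I_n -> R) :
  is_poset le -> natural_labeling le -> (forall j, 0 < x j) ->
  forall pi' : {perm 'I_n}, pi' \in linext le ->
    \sum_(pi in linext le) transM le x pi' pi = 0.
Proof.
move=> _ _ _ pi' pi'L.
rewrite (bigD1 pi') //= {1}/transM eqxx /=.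
rewrite [X in _ + X](eq_bigr (fun pi => \sum_j
    if promo le pi j == pi' then x j else 0)); last first.
  by move=> pi /andP [_ pi_ne]; rewrite /transM eq_sym pi_ne big_mkcond.
rewrite exchange_big /= [X in - X]big_mkcond addrC -sumrB big1 // => j _.
rewrite sum_preimage_nonfixed ?subrr //; first exact: foldl_tau_inj.
by move=> pi piL; rewrite inE; apply: foldl_tau_linext.
Qed.
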